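(* Let $P$ be a poset. If $P$ is well-quasi-ordered and the quasi-ordered set $(S_\omega(P);\leq_{dom})$ is better-quasi-ordered, then $P$ is better-quasi-ordered.
   Context: $S_\omega(P)$ is the set of strictly increasing sequences $x_0<x_1<\cdots$ of elements of $P$, each identified with its set of terms. For subsets $X,Y\subseteq P$, $X\leq_{dom} Y$ means that for every $x\in X$ there is $y\in Y$ with $x\leq y$ (a quasi-order). A quasi-ordered set is well-quasi-ordered (wqo) if it is well-founded and has no infinite antichain. Barriers and bqo: finite subsets of $\mathbb{N}$ are identified with their increasing enumerations. For finite $s,t\subseteq\mathbb{N}$ write $s\triangleleft t$ if there is a finite $r\subseteq\mathbb{N}$ such that $s$ is a proper initial segment of $r$ and $t$ is $r$ with its least element removed. A barrier is an infinite set $B$ of finite subsets of $\mathbb{N}$, no member of which is a proper subset of another, such that every infinite $X\subseteq\bigcup B$ has a nonempty initial segment belonging to $B$. A barrier is well-ordered by the lexicographic order; its order type is the type of this well-order. A map $f$ from a barrier $B$ into a quasi-ordered set $Q$ is good if there exist $s,t\in B$ with $s\triangleleft t$ and $f(s)\leq f(t)$, and bad otherwise. For a countable ordinal $\alpha$, $Q$ is $\alpha$-better-quasi-ordered ($\alpha$-bqo) if every map from a barrier of order type at most $\alpha$ into $Q$ is good; $Q$ is better-quasi-ordered (bqo) if it is $\alpha$-bqo for every countable ordinal $\alpha$. *)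

From mathcomp Require Import all_boot.
Set Implicit Arguments. Unset Strict Implicit. Unset Printing Implicit Defensive.

(* Finite subsets of nat are represented by their increasing enumerations:
   strictly increasing (sorted ltn) sequences of nat. *)

Definition tri (s t : seq nat) : Prop :=
  exists r : seq nat, sorted ltn r /\
    (exists k, k < size r /\ s = take k r) /\ t = behead r.

(* Barriers. An infinite subset X of nat is given by its strictly increasing
   enumeration f; its nonempty initial segments are mkseq f k, k >= 1. *)
Definition is_barrier (B : seq nat -> Prop) : Prop :=
  (forall s, B s -> sorted ltn s) /\
  (~ exists l : seq (seq nat), forall s, B s -> s \in l) /\
  (forall s t, B s -> B t -> {subset s <= t} -> s = t) /\
  (forall f : nat -> nat, (forall n, f n < f n.+1) ->
     (forall n, exists s, B s /\ f n \in s) ->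
     exists k, 0 < k /\ B (mkseq f k)).

Definition good (Q : Type) (R : Q -> Q -> Prop) (B : seq nat -> Prop)
  (f : seq nat -> Q) : Prop :=
  exists s t, B s /\ B t /\ tri s t /\ R (f s) (f t).

(* Q is bqo iff it is alpha-bqo for every countable ordinal alpha; since every
   barrier has a countable order type this means: every map from every
   barrier into Q is good. *)
Definition bqo (Q : Type) (R : Q -> Q -> Prop) : Prop :=
  forall B, is_barrier B -> forall f : seq nat -> Q, good R B f.

Definition wqo (Q : Type) (R : Q -> Q -> Prop) : Prop :=
  well_founded (fun x y => R x y /\ ~ R y x) /\
  ~ (exists g : nat -> Q, forall i j, i <> j -> ~ R (g i) (g j)).

Definition Somega (P : Type) (le : P -> P -> Prop) : Type :=
  { x : nat -> P | forall n, le (x n) (x n.+1) /\ x n <> x n.+1 }.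

Definition dom_le (P : Type) (le : P -> P -> Prop) (X Y : Somega le) : Prop :=
  forall i, exists j, le (proj1_sig X i) (proj1_sig Y j).

From mathcomp Require Import all_boot.
From Stdlib Require Import Classical ClassicalEpsilon FunctionalExtensionality.
Set Implicit Arguments. Unset Strict Implicit. Unset Printing Implicit Defensive.

(* Let f be a bad map from a barrier B to P. Fix an increasing enumeration of
   an infinite part of the union of B; each increasing sequence h inside it has
   exactly one initial segment in B, and phi h, the value of f there, is never
   below phi (shift h), because the two segments are related by <|.
   A fusion argument gives an infinite Y1 such that, for h inside Y1, phi h is
   determined by the first stab_len h terms of h, with stab_len h minimal; cut h
   is h with its term of index (stab_len h).-1 removed. Three applications of
   the Nash-Williams theorem for clopen colourings yield an infinite Y on which
   stab_len h <= stab_len (shift h) and phi h < phi (cut h); the other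
   homogeneous outcomes contradict respectively the well-foundedness of nat,
   the wqo property of P, and the minimality of stab_len.
   Hence s |-> (phi (cut^n (extend s)))_n maps B restricted to Y into
   S_omega(P), and bqo-ness gives s <| t with f s = phi (extend s) below some
   phi (cut^j (extend t)). Putting the least element of s in front of
   cut^j (extend t) yields a sequence whose phi is still f s and whose shift is
   cut^j (extend t): this contradicts the first observation. *)

(** * Infinite sets of naturals *)


(* Increasing functions nat -> nat encode infinite subsets of nat;
   [range_sub h Y] says that the set encoded by [h] is a subset of that of [Y]. *)
Definition increasing (h : nat -> nat) := forall n, h n < h n.+1.
Definition range_sub (h Y : nat -> nat) := forall n, exists m, h n = Y m.
Definition agree n (h h' : nat -> nat) := forall i, i < n -> h i = h' i.
Definition shift (h : nat -> nat) i := h i.+1.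
Definition dropf n (h : nat -> nat) i := h (i + n).
Definition prepend (u : seq nat) (z : nat -> nat) i :=
  if i < size u then nth 0 u i else z (i - size u).
Definition above (u : seq nat) (z : nat -> nat) := forall x, x \in u -> x < z 0.
Definition seq_in (u : seq nat) (Y : nat -> nat) := forall x, x \in u -> exists m, x = Y m.

Section Increasing.
Variable h : nat -> nat.
Hypothesis h_incr : increasing h.

Lemma increasing_lt i j : i < j -> h i < h j.
Proof. exact: (homo_ltn ltn_trans h_incr). Qed.

Lemma increasing_le i j : i <= j -> h i <= h j.
Proof. exact: (homo_leq leqnn leq_trans (fun i => ltnW (h_incr i))). Qed.

Lemma increasing_ltE i j : (h i < h j) = (i < j).
Proof.
case: (ltnP i j) => [/increasing_lt -> // | /increasing_le].
by rewrite leqNgt => /negbTE.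
Qed.

Lemma leq_increasing i : i <= h i.
Proof. elim: i => // i IH; exact: leq_ltn_trans IH (h_incr i). Qed.

Lemma increasing_shift : increasing (shift h).
Proof. by move=> i; apply: h_incr. Qed.

Lemma increasing_dropf n : increasing (dropf n h).
Proof. by move=> i; rewrite /dropf addSn. Qed.

Lemma leq_dropf n i : n <= dropf n h i.
Proof. exact: leq_trans (leq_addl i n) (leq_increasing _). Qed.

End Increasing.

Lemma range_sub_refl h : range_sub h h.
Proof. by move=> n; exists n. Qed.

Lemma range_sub_trans h1 h2 h3 : range_sub h1 h2 -> range_sub h2 h3 -> range_sub h1 h3.
Proof. by move=> S12 S23 n; have [m ->] := S12 n; apply: S23. Qed.

Lemma range_sub_shift h : range_sub (shift h) h.
Proof. by move=> n; exists n.+1. Qed.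

Lemma range_sub_dropf n h : range_sub (dropf n h) h.
Proof. by move=> i; exists (i + n). Qed.

Lemma range_sub_dropf_leq m n h : m <= n -> range_sub (dropf n h) (dropf m h).
Proof. by move=> le_mn i; exists (i + (n - m)); rewrite /dropf -addnA subnK. Qed.

Lemma agree_le n m h h' : m <= n -> agree n h h' -> agree m h h'.
Proof. by move=> le_mn A i Hi; apply: A; exact: leq_trans Hi le_mn. Qed.

Lemma agree_sym n h h' : agree n h h' -> agree n h' h.
Proof. by move=> A i Hi; rewrite A. Qed.

Lemma agree_trans n h1 h2 h3 : agree n h1 h2 -> agree n h2 h3 -> agree n h1 h3.
Proof. by move=> A12 A23 i Hi; rewrite A12 ?A23. Qed.

Lemma agree_mkseq n h h' : agree n h h' -> mkseq h n = mkseq h' n.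
Proof. by move=> A; apply/eq_in_map => i; rewrite mem_iota => /A. Qed.

Lemma mem_mkseqP (h : nat -> nat) n x :
  reflect (exists2 i, i < n & x = h i) (x \in mkseq h n).
Proof.
apply: (iffP mapP) => [[i]|[i]]; rewrite ?mem_iota => ? ->; exists i => //.
by rewrite mem_iota.
Qed.

Lemma seq_in_mkseq h n Y : range_sub h Y -> seq_in (mkseq h n) Y.
Proof. by move=> hY x /mem_mkseqP [i _ ->]. Qed.

Lemma sorted_mkseq h n : increasing h -> sorted ltn (mkseq h n).
Proof.
move=> h_incr; apply/(sortedP 0) => i; rewrite size_mkseq => lt_i1n.
by rewrite !nth_mkseq //; [apply: h_incr | apply: ltnW].
Qed.

Lemma take_mkseq (h : nat -> nat) k n : k <= n -> take k (mkseq h n) = mkseq h k.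
Proof. by move=> le_kn; rewrite /mkseq -map_take take_iota (minn_idPl le_kn). Qed.

Lemma behead_mkseq (h : nat -> nat) n : behead (mkseq h n.+1) = mkseq (shift h) n.
Proof.
apply: (@eq_from_nth _ 0); rewrite size_behead !size_mkseq // => i Hi.
by rewrite nth_behead !nth_mkseq.
Qed.

Section Prepend.
Variables (u : seq nat) (z : nat -> nat).

Lemma prepend_lt i : i < size u -> prepend u z i = nth 0 u i.
Proof. by rewrite /prepend => ->. Qed.

Lemma dropf_prepend : dropf (size u) (prepend u z) = z.
Proof.
by apply: functional_extensionality => i; rewrite /dropf /prepend ltnNge leq_addl addnK.
Qed.

Lemma mkseq_prepend : mkseq (prepend u z) (size u) = u.
Proof.
apply: (@eq_from_nth _ 0); rewrite size_mkseq // => i Hi.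
by rewrite nth_mkseq // prepend_lt.
Qed.

Lemma increasing_prepend : sorted ltn u -> above u z -> increasing z ->
  increasing (prepend u z).
Proof.
move=> u_sorted u_z z_incr i; rewrite /prepend.
case: (ltnP i.+1 (size u)) => H1.
  by rewrite (ltnW H1); apply: (sorted_ltn_nth ltn_trans 0 u_sorted); rewrite ?inE // ltnW.
case: (ltnP i (size u)) => H2; last by rewrite subSn.
have -> : i.+1 = size u by apply/eqP; rewrite eqn_leq H1 H2.
by rewrite subnn; apply: u_z; rewrite mem_nth.
Qed.

Lemma range_sub_prepend Y : seq_in u Y -> range_sub z Y -> range_sub (prepend u z) Y.
Proof.
move=> u_Y z_Y i; rewrite /prepend; case: ltnP => H; last exact: z_Y.
by apply: u_Y; rewrite mem_nth.
Qed.

Lemma prepend_rcons : prepend u z = prepend (rcons u (z 0)) (shift z).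
Proof.
apply: functional_extensionality => i; rewrite /prepend /shift size_rcons nth_rcons.
case: (ltngtP i (size u)) => H.
- by rewrite ltnS ltnW.
- by rewrite ltnS leqNgt H /= subnS prednK // subn_gt0.
- by rewrite H ltnSn subnn.
Qed.

End Prepend.

Lemma prepend_nil z : prepend [::] z = z.
Proof. by apply: functional_extensionality => i; rewrite /prepend /= subn0. Qed.

Lemma prepend1S x z i : prepend [:: x] z i.+1 = z i.
Proof. by rewrite /prepend /= subSS subn0. Qed.

Lemma shift_prepend1 x z : shift (prepend [:: x] z) = z.
Proof. by apply: functional_extensionality => i; apply: prepend1S. Qed.

Lemma shift_dropf n h : shift (dropf n h) = dropf n.+1 h.
Proof. by apply: functional_extensionality => i; rewrite /shift /dropf addSnnS. Qed.

Lemma prepend_mkseq h n : prepend (mkseq h n) (dropf n h) = h.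
Proof.
apply: functional_extensionality => i; rewrite /prepend /dropf size_mkseq.
by case: ltnP => H; rewrite ?nth_mkseq ?subnK.
Qed.

Lemma agree_prepend_mkseq h n z : agree n h (prepend (mkseq h n) z).
Proof. by move=> i Hi; rewrite prepend_lt ?size_mkseq ?nth_mkseq. Qed.

Lemma above_range_sub_dropf h n z : increasing h -> range_sub z (dropf n h) ->
  above (mkseq h n) z.
Proof.
move=> h_incr z_tail x /mem_mkseqP [i lt_in ->]; have [m ->] := z_tail 0.
by rewrite /dropf (increasing_ltE h_incr) (leq_trans lt_in (leq_addl m n)).
Qed.

Fixpoint subseqs (l : seq nat) : seq (seq nat) :=
  if l is x :: l' then subseqs l' ++ map (cons x) (subseqs l') else [:: [::]].

Lemma mem_subseqs l u : (u \in subseqs l) = subseq u l.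
Proof.
elim: l u => [|x l IH] u /=; first by case: u.
rewrite mem_cat IH; case: u => [|y u] /=; first by rewrite sub0seq.
case: eqP => [->|ne].
  apply/orP/idP => [[/cons_subseq//|/mapP[v]]|H].
    by rewrite IH => H [->].
  by right; apply/mapP; exists u; rewrite // IH.
by apply/orP/idP => [[//|/mapP[v _ [E _]]]|H]; [case: ne | left].
Qed.

Lemma sorted_subset_subseq (u l : seq nat) :
  sorted ltn u -> sorted ltn l -> {subset u <= l} -> subseq u l.
Proof.
move=> u_sorted l_sorted ul.
have -> : u = filter (mem u) l.
  apply: (@irr_sorted_eq _ ltn ltn_trans ltnn) => //.
    exact: (sorted_filter ltn_trans _ l_sorted).
  by move=> x; rewrite mem_filter /=; case E: (x \in u) => //=; rewrite ul.
exact: filter_subseq.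
Qed.

Lemma mem_subseqs_sorted (u l : seq nat) :
  sorted ltn u -> sorted ltn l -> {subset u <= l} -> u \in subseqs l.
Proof. by move=> *; rewrite mem_subseqs; apply: sorted_subset_subseq. Qed.

Lemma sorted_rcons_lt (u : seq nat) y x : sorted ltn (rcons u y) -> x \in u -> x < y.
Proof.
move=> uy_sorted xu.
have : subseq ([:: x] ++ [:: y]) (u ++ [:: y]) by apply: cat_subseq; rewrite ?sub1seq ?mem_head.
by rewrite cats1 => /(subseq_sorted ltn_trans) /(_ uy_sorted) /andP[].
Qed.

Lemma sorted_rconsI (u : seq nat) y : sorted ltn (rcons u y) -> sorted ltn u.
Proof. exact: (subseq_sorted ltn_trans (subseq_rcons u y)). Qed.

Lemma sorted_rcons (u : seq nat) y :
  sorted ltn u -> (forall x, x \in u -> x < y) -> sorted ltn (rcons u y).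
Proof. by case: u => //= a u; rewrite rcons_path => -> /= -> //; apply: mem_last. Qed.

Lemma leq_last_sorted (u : seq nat) x d : sorted ltn u -> x \in u -> x <= last d u.
Proof.
case/lastP: u => [//|u y]; rewrite last_rcons mem_rcons inE => uy_sorted.
by case/orP=> [/eqP-> // | xu]; exact/ltnW/(sorted_rcons_lt uy_sorted xu).
Qed.

Lemma leq_sumn (s : seq nat) x : x \in s -> x <= sumn s.
Proof.
elim: s => //= a s IH; rewrite inE => /orP[/eqP->|/IH H]; first exact: leq_addr.
exact: leq_trans H (leq_addl _ _).
Qed.

Lemma eventually_all (X : eqType) (l : seq X) (p : X -> nat -> Prop) :
  (forall x, x \in l -> exists N, forall j, N <= j -> p x j) ->
  exists N, forall j, N <= j -> forall x, x \in l -> p x j.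
Proof.
elim: l => [|a l IH] H; first by exists 0.
have [N1 H1] := H a (mem_head _ _).
have [N2 H2] : exists N, forall j, N <= j -> forall x, x \in l -> p x j.
  by apply: IH => x xl; apply: H; rewrite inE xl orbT.
exists (maxn N1 N2) => j; rewrite geq_max => /andP[N1j N2j] x.
by rewrite inE => /orP[/eqP-> | /H2]; [apply: H1 | apply].
Qed.

(** * Choice, well-foundedness and wqo *)

Definition asbool (A : Prop) : bool :=
  if excluded_middle_informative A then true else false.

Lemma asboolP (A : Prop) : reflect A (asbool A).
Proof. by rewrite /asbool; case: excluded_middle_informative => H; constructor. Qed.

Lemma infinite_increasing (p : nat -> Prop) :
  (forall N, exists i, N <= i /\ p i) -> exists c, increasing c /\ forall n, p (c n).
Proof.
move=> H; pose g N := proj1_sig (constructive_indefinite_description _ (H N)).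
have gP N : N <= g N /\ p (g N) by rewrite /g; case: constructive_indefinite_description.
pose c := fix c n := if n is n'.+1 then g (c n').+1 else g 0.
by exists c; split => [n | [|n]]; [exact: (gP _).1 | exact: (gP _).2 | exact: (gP _).2].
Qed.

Lemma well_founded_no_descent T (R : T -> T -> Prop) (p : T -> Prop) :
  well_founded R -> (forall x, p x -> exists2 y, p y & R y x) -> forall x, ~ p x.
Proof.
move=> R_wf descent x; elim: (R_wf x) => {}x _ IH px.
by have [y py Ryx] := descent x px; exact: IH Ryx py.
Qed.

Section WqoGood.
Variables (T : Type) (le : T -> T -> Prop) (g : nat -> T).
Hypothesis le_wqo : wqo le.
Hypothesis g_bad : forall i j, i < j -> ~ le (g i) (g j).

(* Since [g] is bad, an index [i] that is minimal in this sense is also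
   minimal for the strict order; infinitely many of them form an antichain. *)
Let minimal i := forall j, i < j -> ~ le (g j) (g i).

Lemma bad_minimal_finite : exists N, forall i, N <= i -> ~ minimal i.
Proof.
apply: NNPP => Hinf.
have [c [c_incr c_min]] : exists c, increasing c /\ forall n, minimal (c n).
  apply: infinite_increasing => N; apply: NNPP => H; apply: Hinf.
  by exists N => i Ni mi; apply: H; exists i.
apply: le_wqo.2; exists (g \o c) => i j /eqP; rewrite neq_ltn => /orP[] lt_ij /=.
  exact: g_bad (increasing_lt c_incr lt_ij).
exact: c_min (increasing_lt c_incr lt_ij).
Qed.

Lemma bad_seq_false : False.
Proof.
have [N not_min] := bad_minimal_finite.
pose p x := exists2 i, N <= i & g i = x.
apply: (well_founded_no_descent le_wqo.1 (p := p)) (g N) _; last by exists N.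
move=> _ [i Ni <-]; apply: NNPP => H; apply: (not_min i Ni) => j lt_ij le_ji.
apply: H; exists (g j); first by exists j => //; exact: leq_trans Ni (ltnW lt_ij).
by split => //; apply: g_bad.
Qed.

End WqoGood.

Lemma wqo_good T (le : T -> T -> Prop) :
  wqo le -> forall g : nat -> T, exists i j, i < j /\ le (g i) (g j).
Proof.
move=> le_wqo g; apply: NNPP => H; apply: (bad_seq_false (g := g) le_wqo).
by move=> i j lt_ij le_ij; apply: H; exists i, j.
Qed.

(** * Fusion and the Nash-Williams theorem *)

Section Fusion.
Variable Q : seq nat -> (nat -> nat) -> Prop.
Hypothesis Q_antitone : forall u Y Y',
  (forall z, increasing z -> range_sub z Y -> above u z -> range_sub z Y') ->
  Q u Y' -> Q u Y.

Definition rejects u Y :=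
  forall Y', increasing Y' -> range_sub Y' Y -> above u Y' -> ~ Q u Y'.

Definition decides u Y :=
  Q u Y \/ forall Y', increasing Y' -> range_sub Y' Y -> ~ Q u Y'.

Lemma decides_range_sub u Y Y' : range_sub Y Y' -> decides u Y' -> decides u Y.
Proof.
move=> YY' [H|H]; last by right => Y2 Y2_incr Y2Y; apply: H Y2_incr (range_sub_trans Y2Y YY').
by left; apply: Q_antitone H => z _ zY _; exact: range_sub_trans zY YY'.
Qed.

Definition decide1 u Y : nat -> nat :=
  match excluded_middle_informative
          (exists Y', increasing Y' /\ range_sub Y' Y /\ Q u Y') with
  | left H => proj1_sig (constructive_indefinite_description _ H)
  | right _ => Y
  end.

Lemma decide1_spec u Y : increasing Y ->
  [/\ increasing (decide1 u Y), range_sub (decide1 u Y) Y & decides u (decide1 u Y)].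
Proof.
move=> Y_incr; rewrite /decide1; case: excluded_middle_informative => [H|H].
  by case: (constructive_indefinite_description _ H) => Y' [? [? ?]]; split => //; left.
split => //; first exact: range_sub_refl.
by right => Y' ? ? ?; apply: H; exists Y'.
Qed.

Definition decide_all (l : seq (seq nat)) Y := foldr decide1 Y l.

Lemma decide_all_spec l Y : increasing Y ->
  [/\ increasing (decide_all l Y), range_sub (decide_all l Y) Y &
      forall u, u \in l -> decides u (decide_all l Y)].
Proof.
move=> Y_incr; elim: l => [|u l [I1 S1 D1]] /=; first by split => //; exact: range_sub_refl.
have [I2 S2 D2] := decide1_spec u I1.
split => //; first exact: range_sub_trans S2 S1.
by move=> v; rewrite inE => /orP[/eqP-> // | /D1]; apply: decides_range_sub.
Qed.

Variable Y0 : nat -> nat.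
Hypothesis Y0_incr : increasing Y0.

(* A state is a bound [b] and a set [Y]: all [u] included in [0, b) get decided
   inside [Y], the least element of the result is kept forever, and the
   construction continues above it. *)
Definition fusion_step (p : nat * (nat -> nat)) :=
  let c := decide_all (subseqs (iota 0 p.1)) p.2 in ((c 0).+1, shift c).

Fixpoint fusion_state k :=
  if k is k'.+1 then fusion_step (fusion_state k') else (0, Y0).

Definition fusion_stage k :=
  decide_all (subseqs (iota 0 (fusion_state k).1)) (fusion_state k).2.

Definition fusion_seq k := fusion_stage k 0.

Lemma fusion_state_spec k :
  increasing (fusion_state k).2 /\ range_sub (fusion_state k).2 Y0.
Proof.
elim: k => [|k [I S]] /=; first by split => //; exact: range_sub_refl.
have [I1 S1 _] := decide_all_spec (subseqs (iota 0 (fusion_state k).1)) I.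
split; first exact: increasing_shift.
exact: range_sub_trans (range_sub_shift _) (range_sub_trans S1 S).
Qed.

Lemma fusion_stage_spec k :
  [/\ increasing (fusion_stage k), range_sub (fusion_stage k) Y0 &
      forall u, u \in subseqs (iota 0 (fusion_state k).1) -> decides u (fusion_stage k)].
Proof.
have [I S] := fusion_state_spec k.
have [I1 S1 D1] := decide_all_spec (subseqs (iota 0 (fusion_state k).1)) I.
by split => //; exact: range_sub_trans S1 S.
Qed.

Lemma range_sub_fusion_stageS k :
  range_sub (fusion_stage k.+1) (shift (fusion_stage k)).
Proof.
have [I _] := fusion_state_spec k.+1.
by have [_ S _] := decide_all_spec (subseqs (iota 0 (fusion_state k.+1).1)) I.
Qed.

Lemma range_sub_fusion_stage k d : range_sub (fusion_stage (k + d)) (fusion_stage k).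
Proof.
elim: d => [|d IH]; first by rewrite addn0; exact: range_sub_refl.
apply: range_sub_trans IH; rewrite addnS.
exact: range_sub_trans (range_sub_fusion_stageS _) (range_sub_shift _).
Qed.

Lemma fusion_seq_in_stage k j : k <= j -> exists m, fusion_seq j = fusion_stage k m.
Proof. by move=> le_kj; rewrite -(subnKC le_kj); apply: range_sub_fusion_stage. Qed.

Lemma increasing_fusion_seq : increasing fusion_seq.
Proof.
move=> k; rewrite /fusion_seq; have [m ->] := range_sub_fusion_stageS k 0.
have [I _ _] := fusion_stage_spec k.
exact: leq_trans (I 0) (increasing_le I (ltn0Sn m)).
Qed.

Lemma range_sub_fusion_seq : range_sub fusion_seq Y0.
Proof. by move=> k; have [_ S _] := fusion_stage_spec k; apply: S. Qed.

Theorem fusion : exists Y1, [/\ increasing Y1, range_sub Y1 Y0 &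
  forall u, sorted ltn u -> seq_in u Y1 -> Q u Y1 \/ rejects u Y1].
Proof.
exists fusion_seq; split; [exact: increasing_fusion_seq | exact: range_sub_fusion_seq |].
move=> u u_sorted u_in.
have [k [u_k above_k]] : exists k, u \in subseqs (iota 0 (fusion_state k).1) /\
   forall z, increasing z -> range_sub z fusion_seq -> above u z -> range_sub z (fusion_stage k).
  case/lastP E: u => [|u' a].
    by exists 0; split => //= z _ z_seq _ n; have [j ->] := z_seq n; apply: fusion_seq_in_stage.
  have [k' ak'] : exists k', a = fusion_seq k' by apply: u_in; rewrite E mem_rcons mem_head.
  exists k'.+1; split.
    apply: mem_subseqs_sorted; rewrite -?E //; first exact: iota_ltn_sorted.
    move=> x xu; rewrite mem_iota leq0n add0n ltnS /=.
    by have := leq_last_sorted 0 u_sorted xu; rewrite E last_rcons ak'.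
  move=> z z_incr z_seq u_z n; have [j zj] := z_seq n; rewrite zj; apply: fusion_seq_in_stage.
  have a_u : a \in rcons u' a by rewrite mem_rcons mem_head.
  have := leq_trans (u_z a a_u) (increasing_le z_incr (leq0n n)).
  by rewrite zj ak' (increasing_ltE increasing_fusion_seq).
have [_ _ D] := fusion_stage_spec k.
case: (D u u_k) => [Qk|NQ]; [left; exact: Q_antitone above_k Qk | right => Y' I' S' A' Q'].
exact: NQ I' (above_k _ I' S' A') Q'.
Qed.

End Fusion.

Lemma subset_rcons_max (ws u : seq nat) w :
  sorted ltn u -> (forall x, x \in ws -> x < w) -> {subset u <= rcons ws w} ->
  {subset u <= ws} \/ exists2 u', u = rcons u' w & {subset u' <= ws}.
Proof.
move=> u_sorted ws_lt u_sub.
have u_ws x : x \in u -> x != w -> x \in ws.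
  by move=> /u_sub; rewrite mem_rcons inE => /orP[/eqP-> | //]; rewrite eqxx.
case wu: (w \in u); last first.
  by left => x xu; apply: (u_ws _ xu); apply: contraFneq wu => <-.
right; case/lastP: u u_sorted u_sub u_ws wu => [//|u' y] u_sorted _ u_ws wu.
have lt_u'y x : x \in u' -> x < y := sorted_rcons_lt u_sorted.
have yw : y = w.
  apply/eqP; apply: contraFT (ltnn w) => ne_yw.
  have y_u : y \in rcons u' y by rewrite mem_rcons mem_head.
  have lt_yw := ws_lt y (u_ws y y_u ne_yw).
  move: wu; rewrite mem_rcons inE eq_sym (negbTE ne_yw) => /lt_u'y lt_wy.
  exact: ltn_trans lt_wy lt_yw.
exists u'; first by rewrite yw.
move=> x xu'; apply: u_ws; first by rewrite mem_rcons inE xu' orbT.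
by rewrite -yw; apply/eqP => exy; have := lt_u'y x xu'; rewrite exy ltnn.
Qed.

Section NashWilliams.
Variable Y0 : nat -> nat.
Hypothesis Y0_incr : increasing Y0.
Variable colour : (nat -> nat) -> bool.
Hypothesis colour_continuous : forall h, increasing h -> range_sub h Y0 ->
  exists n, forall h', increasing h' -> range_sub h' Y0 -> agree n h h' ->
    colour h' = colour h.

Definition accepts u Y := forall z, increasing z -> range_sub z Y -> above u z ->
  colour (prepend u z) = true.

Lemma accepts_antitone u Y Y' :
  (forall z, increasing z -> range_sub z Y -> above u z -> range_sub z Y') ->
  accepts u Y' -> accepts u Y.
Proof. by move=> H acc z z_incr zY u_z; apply: acc => //; apply: H. Qed.

Section Diagonal.
Variable Y1 : nat -> nat.
Hypothesis Y1_incr : increasing Y1.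
Hypothesis Y1_Y0 : range_sub Y1 Y0.
Hypothesis Y1_decides : forall u, sorted ltn u -> seq_in u Y1 ->
  accepts u Y1 \/ rejects accepts u Y1.
Hypothesis nil_rejected : rejects accepts [::] Y1.

Lemma rejects_rcons u : sorted ltn u -> seq_in u Y1 -> rejects accepts u Y1 ->
  exists N, forall j, N <= j -> rejects accepts (rcons u (Y1 j)) Y1.
Proof.
move=> u_sorted u_in u_rej; apply: NNPP => not_ev.
set M := sumn u.
have [G [G_incr G_acc]] : exists G, increasing G /\
    forall n, M < G n /\ accepts (rcons u (Y1 (G n))) Y1.
  apply: (infinite_increasing (p := fun j => M < j /\ accepts (rcons u (Y1 j)) Y1)).
  move=> N; apply: NNPP => H; apply: not_ev.
  exists (maxn N M.+1) => j; rewrite geq_max => /andP[Nj Mj].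
  have u_lt x : x \in u -> x < Y1 j.
    move=> xu; exact: leq_ltn_trans (leq_sumn xu) (leq_trans Mj (leq_increasing Y1_incr j)).
  have uj_in : seq_in (rcons u (Y1 j)) Y1.
    by move=> x; rewrite mem_rcons inE => /orP[/eqP->|/u_in//]; exists j.
  by case: (Y1_decides (sorted_rcons u_sorted u_lt) uj_in) => // acc; case: H; exists j.
refine (u_rej (fun n => Y1 (G n)) _ _ _ _).
- by move=> n; rewrite (increasing_ltE Y1_incr).
- by move=> n; exists (G n).
- move=> x xu; apply: leq_ltn_trans (leq_sumn xu) _.
  exact: leq_trans (G_acc 0).1 (leq_increasing Y1_incr _).
move=> z z_incr zG u_z; rewrite prepend_rcons.
have [m zm] := zG 0; rewrite zm.
apply: (G_acc m).2; first exact: increasing_shift.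
  by move=> n; have [k zk] := zG n.+1; exists (G k); exact: zk.
move=> x; rewrite mem_rcons inE => /orP[/eqP-> | xu]; first by rewrite -zm; apply: z_incr.
exact: ltn_trans (u_z x xu) (z_incr 0).
Qed.

Definition next_ok (ws : seq nat) j := (forall x, x \in ws -> x < Y1 j) /\
  forall u, sorted ltn u -> {subset u <= ws} -> rejects accepts (rcons u (Y1 j)) Y1.

Definition all_rejected ws := [/\ sorted ltn ws, seq_in ws Y1 &
  forall u, sorted ltn u -> {subset u <= ws} -> rejects accepts u Y1].

Definition next_index ws :=
  match excluded_middle_informative (exists j, next_ok ws j) with
  | left H => proj1_sig (constructive_indefinite_description _ H)
  | right _ => 0
  end.

Lemma next_indexP ws : all_rejected ws -> next_ok ws (next_index ws).
Proof.
move=> [ws_sorted ws_in ws_rej]; rewrite /next_index.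
case: excluded_middle_informative => [H|[]]; first by case: constructive_indefinite_description.
have [N HN] : exists N, forall j, N <= j ->
    forall u, u \in subseqs ws -> rejects accepts (rcons u (Y1 j)) Y1.
  apply: eventually_all => u; rewrite mem_subseqs => u_ws.
  have u_sorted : sorted ltn u := subseq_sorted ltn_trans u_ws ws_sorted.
  apply: rejects_rcons => //; first by move=> x /(mem_subseq u_ws) /ws_in.
  exact: ws_rej (mem_subseq u_ws).
exists (maxn N (sumn ws).+1); split.
  move=> x xw; apply: leq_ltn_trans (leq_sumn xw) _.
  exact: leq_trans (leq_maxr _ _) (leq_increasing Y1_incr _).
move=> u u_sorted u_ws; apply: HN; first exact: leq_maxl.
exact: mem_subseqs_sorted.
Qed.

Fixpoint diag_prefix k :=
  if k is k'.+1 then rcons (diag_prefix k') (Y1 (next_index (diag_prefix k')))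
  else [::].

Lemma all_rejected_diag_prefix k : all_rejected (diag_prefix k).
Proof.
elim: k => [|k IH] /=.
  split => // u _ u_nil.
  by have -> : u = [::] by case: u u_nil => // a u /(_ a (mem_head _ _)).
have [ws_lt rej_next] := next_indexP IH; have [ws_sorted ws_in ws_rej] := IH.
split; first exact: sorted_rcons.
  by move=> x; rewrite mem_rcons inE => /orP[/eqP->|/ws_in//]; eexists.
move=> u u_sorted u_sub.
case: (subset_rcons_max u_sorted ws_lt u_sub) => [|[u' u_eq u'_sub]]; first exact: ws_rej.
rewrite u_eq in u_sorted *; apply: rej_next u'_sub; exact: sorted_rconsI u_sorted.
Qed.

Definition diag_seq k := Y1 (next_index (diag_prefix k)).

Lemma diag_prefix_mkseq k : diag_prefix k = mkseq diag_seq k.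
Proof. by elim: k => //= k IH; rewrite mkseqS -IH. Qed.

Lemma increasing_diag_seq : increasing diag_seq.
Proof.
move=> k; have [lt_next _] := next_indexP (all_rejected_diag_prefix k.+1).
by apply: lt_next; rewrite /= mem_rcons mem_head.
Qed.

Lemma range_sub_diag_seq : range_sub diag_seq Y1.
Proof. by move=> k; exists (next_index (diag_prefix k)). Qed.

Lemma colour_diag_seq h : increasing h -> range_sub h diag_seq -> colour h = false.
Proof.
move=> h_incr h_diag; apply: negbTE; apply/negP => ch.
have h_Y0 := range_sub_trans h_diag (range_sub_trans range_sub_diag_seq Y1_Y0).
have [n Hn] := colour_continuous h_incr h_Y0.
set u := mkseq h n.
have u_sub : {subset u <= diag_prefix (h n)}.
  move=> x /mem_mkseqP [i lt_in ->]; have [m hm] := h_diag i.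
  rewrite hm diag_prefix_mkseq; apply/mem_mkseqP; exists m => //.
  apply: leq_ltn_trans (leq_increasing increasing_diag_seq m) _.
  by rewrite -hm; apply: increasing_lt.
have [_ pref_in pref_rej] := all_rejected_diag_prefix (h n).
apply: (pref_rej u (sorted_mkseq n h_incr) u_sub (dropf (sumn u).+1 Y1)).
- exact: increasing_dropf.
- exact: range_sub_dropf.
- by move=> x xu; apply: leq_ltn_trans (leq_sumn xu) (leq_dropf Y1_incr _ _).
move=> z z_incr z_tail u_z; rewrite -ch; apply: Hn.
- exact: increasing_prepend (sorted_mkseq _ h_incr) u_z z_incr.
- apply: range_sub_prepend _ (range_sub_trans z_tail (range_sub_trans (range_sub_dropf _ _) Y1_Y0)).
  by move=> x /u_sub /pref_in [m ->]; apply: Y1_Y0.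
- exact: agree_prepend_mkseq.
Qed.

End Diagonal.

Theorem nash_williams : exists Y, [/\ increasing Y, range_sub Y Y0 &
  exists c, forall h, increasing h -> range_sub h Y -> colour h = c].
Proof.
have [Y1 [Y1_incr Y1_Y0 Y1_dec]] := fusion accepts_antitone Y0_incr.
case: (Y1_dec [::] erefl (fun x (x_nil : x \in [::]) => False_ind _ (notF x_nil))).
  move=> acc; exists Y1; split => //; exists true => h h_incr hY1.
  by rewrite -(prepend_nil h); apply: acc.
move=> rej; exists (diag_seq Y1); split.
- exact: increasing_diag_seq.
- exact: range_sub_trans (range_sub_diag_seq _) Y1_Y0.
- by exists false => h h_incr h_diag; apply: (colour_diag_seq Y1_incr Y1_Y0 Y1_dec rej).
Qed.

End NashWilliams.

(** * Barriers *)

Section Barrier.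
Variable B : seq nat -> Prop.
Hypothesis B_barrier : is_barrier B.

Definition in_union (h : nat -> nat) := forall n, exists s, B s /\ h n \in s.

Lemma barrier_sorted s : B s -> sorted ltn s.
Proof. by case: B_barrier => H _; apply: H. Qed.

Lemma barrier_infinite : ~ exists l : seq (seq nat), forall s, B s -> s \in l.
Proof. by case: B_barrier => _ []. Qed.

Lemma barrier_antichain s t : B s -> B t -> {subset s <= t} -> s = t.
Proof. by case: B_barrier => _ [_ [H _]]; apply: H. Qed.

Lemma barrier_front h : increasing h -> in_union h -> exists k, 0 < k /\ B (mkseq h k).
Proof. by case: B_barrier => _ [_ [_ H]]; apply: H. Qed.

Lemma barrier_nonempty s : B s -> 0 < size s.
Proof.
case: s => // B_nil; case: barrier_infinite; exists [:: [::]] => t Bt.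
by rewrite (barrier_antichain B_nil Bt) ?mem_head.
Qed.

Lemma barrier_union_enum : exists a, increasing a /\ in_union a.
Proof.
apply: (infinite_increasing (p := fun x => exists s, B s /\ x \in s)) => m.
apply: NNPP => H; apply: barrier_infinite; exists (subseqs (iota 0 m)) => s Bs.
apply: mem_subseqs_sorted; [exact: barrier_sorted | exact: iota_ltn_sorted |].
move=> x xs; rewrite mem_iota leq0n add0n /= ltnNge; apply/negP => le_mx.
by apply: H; exists x; split => //; exists s.
Qed.

Lemma front_unique h k k' : increasing h -> B (mkseq h k) -> B (mkseq h k') -> k = k'.
Proof.
move=> h_incr; wlog le_kk' : k k' / k <= k'.
  move=> W Bk Bk'; case: (leqP k k') => H; first exact: W.
  by apply/esym/W => //; exact: ltnW.
move=> Bk Bk'; suff : mkseq h k = mkseq h k' by move/(congr1 size); rewrite !size_mkseq.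
apply: barrier_antichain Bk Bk' _ => x /mem_mkseqP [i lt_ik ->].
by apply/mem_mkseqP; exists i => //; exact: leq_trans lt_ik le_kk'.
Qed.

Definition front_len h :=
  match excluded_middle_informative (exists k, 0 < k /\ B (mkseq h k)) with
  | left H => proj1_sig (constructive_indefinite_description _ H)
  | right _ => 0
  end.

Lemma front_lenP h : increasing h -> in_union h ->
  0 < front_len h /\ B (mkseq h (front_len h)).
Proof.
move=> h_incr h_union; rewrite /front_len; case: excluded_middle_informative => [H|[]].
  by case: constructive_indefinite_description.
exact: barrier_front.
Qed.

Lemma front_len_agree h h' : increasing h -> in_union h -> increasing h' -> in_union h' ->
  agree (front_len h) h h' -> front_len h' = front_len h.
Proof.
move=> h_incr h_union h'_incr h'_union A.
have [_ Bh] := front_lenP h_incr h_union; have [_ Bh'] := front_lenP h'_incr h'_union.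
by rewrite (agree_mkseq A) in Bh; apply: front_unique Bh' Bh.
Qed.

Lemma restrict_barrier Y : increasing Y -> in_union Y ->
  is_barrier (fun s => B s /\ seq_in s Y).
Proof.
move=> Y_incr Y_union; split; first by move=> s [Bs _]; exact: barrier_sorted.
split.
  move=> [l Hl]; set M := sumn (flatten l); set h := dropf M.+1 Y.
  have h_union : in_union h by move=> n; apply: Y_union.
  have [front_gt0 Bh] := front_lenP (increasing_dropf Y_incr _) h_union.
  have h0_l : h 0 \in flatten l.
    apply/flattenP; exists (mkseq h (front_len h)); last by apply/mem_mkseqP; exists 0.
    by apply: Hl; split => //; apply: seq_in_mkseq (range_sub_dropf _ _).
  by have := leq_sumn h0_l; rewrite -/M leqNgt (leq_dropf Y_incr).
split; first by move=> s t [Bs _] [Bt _]; exact: barrier_antichain.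
move=> g g_incr g_union.
have [k [k_gt0 Bk]] : exists k, 0 < k /\ B (mkseq g k).
  by apply: barrier_front => // n; have [s [[Bs _] gs]] := g_union n; exists s.
exists k; split => //; split => // x /mem_mkseqP [i _ ->].
by have [s [[_ sY] gs]] := g_union i; apply: sY.
Qed.

End Barrier.

(** * A bad map on a barrier *)

Section BadMap.
Variables (P : Type) (le : P -> P -> Prop).
Hypothesis le_refl : forall x, le x x.
Hypothesis le_wqo : wqo le.
Variable B : seq nat -> Prop.
Hypothesis B_barrier : is_barrier B.
Variable f : seq nat -> P.
Hypothesis f_bad : forall s t, B s -> B t -> tri s t -> ~ le (f s) (f t).
Variable a : nat -> nat.
Hypothesis a_incr : increasing a.
Hypothesis a_union : in_union B a.

Definition admissible h := increasing h /\ range_sub h a.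

Lemma admissible_union h : admissible h -> in_union B h.
Proof. by case=> _ ha n; have [m ->] := ha n; apply: a_union. Qed.

Lemma front_admissible h : admissible h ->
  0 < front_len B h /\ B (mkseq h (front_len B h)).
Proof. by move=> adm_h; apply: (front_lenP B_barrier adm_h.1 (admissible_union adm_h)). Qed.

Lemma admissible_shift h : admissible h -> admissible (shift h).
Proof.
case=> h_incr ha; split; first exact: increasing_shift.
exact: range_sub_trans (range_sub_shift h) ha.
Qed.

Definition phi h := f (mkseq h (front_len B h)).

Lemma phi_agree h h' : admissible h -> admissible h' ->
  agree (front_len B h) h h' -> phi h' = phi h.
Proof.
move=> adm_h adm_h' A; rewrite /phi (agree_mkseq A).
by rewrite (front_len_agree B_barrier adm_h.1 (admissible_union adm_h) adm_h'.1
  (admissible_union adm_h') A).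
Qed.

Lemma phi_shift_nle h : admissible h -> ~ le (phi h) (phi (shift h)).
Proof.
move=> adm_h; have [_ Bk] := front_admissible adm_h.
have [_ Bk'] := front_admissible (admissible_shift adm_h).
set k := front_len B h in Bk *; set k' := front_len B (shift h) in Bk' *.
have le_kk' : k <= k'.
  rewrite leqNgt; apply/negP => lt_k'k.
  have sub : {subset mkseq (shift h) k' <= mkseq h k}.
    move=> x /mem_mkseqP [i lt_ik' ->]; apply/mem_mkseqP; exists i.+1 => //.
    exact: leq_ltn_trans lt_ik' lt_k'k.
  have := congr1 size (barrier_antichain B_barrier Bk' Bk sub).
  by rewrite !size_mkseq => E; move: lt_k'k; rewrite E ltnn.
apply: f_bad Bk Bk' _; exists (mkseq h k'.+1); split; first exact: sorted_mkseq adm_h.1.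
split; last by rewrite behead_mkseq.
by exists k; rewrite size_mkseq ltnS take_mkseq // leqW.
Qed.

Definition phi_stable u Y := forall z z', increasing z -> increasing z' ->
  range_sub z Y -> range_sub z' Y -> above u z -> above u z' ->
  phi (prepend u z) = phi (prepend u z').

Lemma phi_stable_antitone u Y Y' :
  (forall z, increasing z -> range_sub z Y -> above u z -> range_sub z Y') ->
  phi_stable u Y' -> phi_stable u Y.
Proof. by move=> H st z z' ? ? zY z'Y ? ?; apply: st => //; apply: H. Qed.

Section Stabilized.
Variable Y1 : nat -> nat.
Hypothesis Y1_incr : increasing Y1.
Hypothesis Y1_a : range_sub Y1 a.
Hypothesis Y1_decides : forall u, sorted ltn u -> seq_in u Y1 ->
  phi_stable u Y1 \/ rejects phi_stable u Y1.

Definition inY1 h := increasing h /\ range_sub h Y1.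

Lemma inY1_admissible h : inY1 h -> admissible h.
Proof. by case=> h_incr hY; split => //; exact: range_sub_trans hY Y1_a. Qed.

Lemma inY1_range_sub h h' : inY1 h -> increasing h' -> range_sub h' h -> inY1 h'.
Proof. by case=> _ hY h'_incr h'h; split => //; exact: range_sub_trans h'h hY. Qed.

Lemma inY1_shift h : inY1 h -> inY1 (shift h).
Proof.
by move=> h_in; apply: (inY1_range_sub h_in (increasing_shift h_in.1) (range_sub_shift h)).
Qed.

Lemma inY1_prepend h n z : inY1 h -> increasing z -> range_sub z Y1 ->
  above (mkseq h n) z -> inY1 (prepend (mkseq h n) z).
Proof.
case=> h_incr hY z_incr zY hz.
split; first exact: increasing_prepend (sorted_mkseq n h_incr) hz z_incr.
exact: range_sub_prepend (seq_in_mkseq hY) zY.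
Qed.

Lemma phi_stable_front h : inY1 h -> phi_stable (mkseq h (front_len B h)) Y1.
Proof.
move=> h_in z z' z_incr z'_incr zY z'Y hz hz'.
have adm_h := inY1_admissible h_in.
have adm_ext w : increasing w -> range_sub w Y1 -> above (mkseq h (front_len B h)) w ->
    admissible (prepend (mkseq h (front_len B h)) w).
  by move=> *; apply/inY1_admissible/inY1_prepend.
rewrite (phi_agree adm_h (adm_ext z z_incr zY hz) (@agree_prepend_mkseq _ _ _)).
by rewrite (phi_agree adm_h (adm_ext z' z'_incr z'Y hz') (@agree_prepend_mkseq _ _ _)).
Qed.

Definition stab_len h :=
  match excluded_middle_informative (exists n, asbool (phi_stable (mkseq h n) Y1)) with
  | left H => ex_minn H
  | right _ => 0
  end.

Lemma stab_lenP h : inY1 h -> phi_stable (mkseq h (stab_len h)) Y1 /\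
  forall n, n < stab_len h -> ~ phi_stable (mkseq h n) Y1.
Proof.
move=> h_in; rewrite /stab_len; case: excluded_middle_informative => [H|[]]; last first.
  by exists (front_len B h); apply/asboolP; exact: phi_stable_front.
case: ex_minnP => m /asboolP st_m min_m; split => // n lt_nm /asboolP /min_m.
by rewrite leqNgt lt_nm.
Qed.

Lemma stab_len_rejects h n : inY1 h -> n < stab_len h ->
  rejects phi_stable (mkseq h n) Y1.
Proof.
move=> h_in lt_n; have [h_incr hY] := h_in.
case: (Y1_decides (sorted_mkseq n h_incr) (seq_in_mkseq hY)) => // st.
by case: ((stab_lenP h_in).2 n lt_n).
Qed.

Lemma stab_len_agree h h' : inY1 h -> inY1 h' -> agree (stab_len h) h h' ->
  stab_len h' = stab_len h /\ phi h' = phi h.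
Proof.
move=> h_in h'_in A; have [st min] := stab_lenP h_in; have [st' min'] := stab_lenP h'_in.
have E := agree_mkseq A.
split.
  apply/eqP; rewrite eqn_leq; apply/andP; split; rewrite leqNgt; apply/negP => lt.
    by apply: (min' _ lt); rewrite -E.
  by apply: (min _ lt); rewrite (agree_mkseq (agree_le (ltnW lt) A)).
rewrite -(prepend_mkseq h (stab_len h)) -(prepend_mkseq h' (stab_len h)) -E.
have [h_incr hY] := h_in; have [h'_incr h'Y] := h'_in.
apply: st.
- exact: increasing_dropf.
- exact: increasing_dropf.
- exact: range_sub_trans (range_sub_dropf _ _) h'Y.
- exact: range_sub_trans (range_sub_dropf _ _) hY.
- by rewrite E; apply: above_range_sub_dropf h'_incr (range_sub_refl _).
- exact: above_range_sub_dropf h_incr (range_sub_refl _).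
Qed.

Lemma stab_len_gt0 h : inY1 h -> 0 < stab_len h.
Proof.
move=> h_in; rewrite lt0n; apply/eqP => len0.
have [st _] := stab_lenP h_in; rewrite len0 in st.
have [h_incr hY] := h_in.
have := st h (shift h) h_incr (increasing_shift h_incr) hY
  (range_sub_trans (range_sub_shift h) hY) (fun x (x0 : x \in [::]) => False_ind _ (notF x0))
  (fun x (x0 : x \in [::]) => False_ind _ (notF x0)).
rewrite !prepend_nil => phi_eq.
by apply: (phi_shift_nle (inY1_admissible h_in)); rewrite -phi_eq.
Qed.

Definition cut h := prepend (mkseq h (stab_len h).-1) (dropf (stab_len h) h).

Lemma range_sub_cut h : range_sub (cut h) h.
Proof.
by apply: range_sub_prepend (seq_in_mkseq (range_sub_refl h)) (range_sub_dropf _ _).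
Qed.

Lemma inY1_cut h : inY1 h -> inY1 (cut h).
Proof.
move=> h_in; apply: (inY1_range_sub h_in _ (range_sub_cut h)).
apply: (increasing_prepend (sorted_mkseq _ h_in.1) _ (increasing_dropf h_in.1 _)).
exact: above_range_sub_dropf h_in.1 (range_sub_dropf_leq h (leq_pred _)).
Qed.

Lemma cut_agree h : agree (stab_len h).-1 (cut h) h.
Proof. exact/agree_sym/agree_prepend_mkseq. Qed.

Lemma cut_nth h i : inY1 h -> (stab_len h).-1 <= i -> cut h i = h i.+1.
Proof.
move=> h_in le_i; rewrite /cut /prepend size_mkseq ltnNge le_i /= /dropf.
by rewrite -[in X in _ + X](prednK (stab_len_gt0 h_in)) addnS subnK.
Qed.

Lemma agree_cut h h' n : inY1 h -> inY1 h' -> agree n.+1 h h' ->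
  stab_len h' = stab_len h -> agree n (cut h) (cut h').
Proof.
move=> h_in h'_in A len_eq i lt_in.
case: (ltnP i (stab_len h).-1) => le_i.
  by rewrite cut_agree // cut_agree ?len_eq // A // leqW.
by rewrite !cut_nth ?len_eq // A.
Qed.

Lemma range_sub_dropf_cut h p : inY1 h -> p <= (stab_len h).-1 ->
  range_sub (dropf p (cut h)) (dropf p h).
Proof.
move=> h_in le_p n; rewrite /dropf.
case: (ltnP (n + p) (stab_len h).-1) => lt; first by exists n; rewrite cut_agree.
by exists n.+1; rewrite cut_nth // addSn.
Qed.

Lemma inY1_iter_cut h i : inY1 h -> inY1 (iter i cut h) /\ range_sub (iter i cut h) h.
Proof.
move=> h_in; elim: i => [|i [Ai Si]] /=; first by split => //; exact: range_sub_refl.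
by split; [exact: inY1_cut | exact: range_sub_trans (range_sub_cut _) Si].
Qed.

Lemma agree_iter_cut h i : inY1 h ->
  agree (stab_len h).-1 (iter i cut h) h /\ stab_len h <= stab_len (iter i cut h).
Proof.
move=> h_in; elim: i => [|i [A le_len]] /=; first by split.
have [Ai _] := inY1_iter_cut i h_in.
have A' : agree (stab_len h).-1 (cut (iter i cut h)) h.
  by apply: agree_trans (agree_le _ (@cut_agree _)) A; rewrite -!subn1 leq_sub2r.
split => //; rewrite leqNgt; apply/negP => lt.
have A2 : agree (stab_len (cut (iter i cut h))) (cut (iter i cut h)) h.
  by apply: agree_le A'; rewrite -ltnS prednK // stab_len_gt0.
have [E _] := stab_len_agree (inY1_cut Ai) h_in A2.
by move: lt; rewrite E ltnn.
Qed.

Lemma range_sub_dropf_iter_cut h j : inY1 h -> 0 < j ->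
  range_sub (dropf (stab_len h).-1 (iter j cut h)) (dropf (stab_len h) h).
Proof.
move=> h_in; case: j => // j _; elim: j => [|j IH].
  rewrite /= /cut -{1}(size_mkseq h (stab_len h).-1) dropf_prepend.
  exact: range_sub_refl.
apply: range_sub_trans IH; rewrite [iter j.+2 cut h]/=.
have [Ai _] := inY1_iter_cut j.+1 h_in; apply: range_sub_dropf_cut => //.
by have [_ le_len] := agree_iter_cut j.+1 h_in; rewrite -!subn1 leq_sub2r.
Qed.

Lemma cut_prepend h z : inY1 h -> increasing z -> range_sub z h ->
  above (mkseq h (stab_len h)) z ->
  let V := prepend (mkseq h (stab_len h)) z in
  [/\ inY1 V, range_sub V h, phi V = phi h & cut V = prepend (mkseq h (stab_len h).-1) z].
Proof.
move=> h_in z_incr zh hz V.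
have V_h : range_sub V h by apply: range_sub_prepend (seq_in_mkseq (range_sub_refl h)) zh.
have V_in : inY1 V.
  exact: (inY1_range_sub h_in (increasing_prepend (sorted_mkseq _ h_in.1) hz z_incr) V_h).
have [len_V phi_V] := stab_len_agree h_in V_in (@agree_prepend_mkseq _ _ _).
split => //; rewrite /cut len_V.
have -> : dropf (stab_len h) V = z.
  by rewrite /V -{1}(size_mkseq h (stab_len h)) dropf_prepend.
congr prepend; apply: agree_mkseq; apply: agree_le (leq_pred _) _.
exact/agree_sym/agree_prepend_mkseq.
Qed.

Lemma cut_iter_lift h j : inY1 h -> 0 < j ->
  exists V, [/\ inY1 V, range_sub V h, phi V = phi h & cut V = iter j cut h].
Proof.
move=> h_in j_gt0; set W := iter j cut h.
have [W_in W_h] := inY1_iter_cut j h_in; have [W_agree _] := agree_iter_cut j h_in.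
have W_tail := range_sub_dropf_iter_cut h_in j_gt0.
set p := (stab_len h).-1 in W_agree W_tail.
have [V_in V_h phi_V cut_V] := cut_prepend h_in (increasing_dropf W_in.1 p)
  (range_sub_trans (range_sub_dropf _ _) W_h) (above_range_sub_dropf h_in.1 W_tail).
exists (prepend (mkseq h (stab_len h)) (dropf p W)); split => //.
by rewrite cut_V -/p -(agree_mkseq W_agree) prepend_mkseq.
Qed.

(* As [P] is wqo, [phi (cut^i Y) <= phi (cut^j Y)] for some [i < j], and
   [cut_iter_lift] collapses [cut^(j - i)] into a single cut. *)
Lemma exists_phi_le_cut Y : inY1 Y ->
  exists2 h, inY1 h /\ range_sub h Y & le (phi h) (phi (cut h)).
Proof.
move=> Y_in; have [i [j [lt_ij le_ij]]] := wqo_good le_wqo (fun i => phi (iter i cut Y)).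
have [Yi_in Yi_Y] := inY1_iter_cut i Y_in.
have [V [V_in V_Yi phi_V cut_V]] := cut_iter_lift Yi_in (etrans (subn_gt0 i j) lt_ij).
exists V; first by split => //; exact: range_sub_trans V_Yi Yi_Y.
by rewrite phi_V cut_V -iterD subnK // ltnW.
Qed.

(* Otherwise [phi] would be stable already on the first [(stab_len Y).-1]
   terms of [Y], against the minimality of [stab_len Y]. *)
Lemma exists_phi_neq_cut Y : inY1 Y ->
  exists2 h, inY1 h /\ range_sub h Y & phi h <> phi (cut h).
Proof.
move=> Y_in; apply: NNPP => H.
have phi_cut h : inY1 h -> range_sub h Y -> phi h = phi (cut h).
  by move=> h_in hY; apply: NNPP => ne; apply: H; exists h.
set n := (stab_len Y).-1.
have lt_n : n < stab_len Y by rewrite /n prednK // stab_len_gt0.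
have phi_ext z : increasing z -> range_sub z (dropf (stab_len Y) Y) ->
    phi (prepend (mkseq Y n) z) = phi Y.
  move=> z_incr z_tail.
  have [V_in V_Y phi_V cut_V] := cut_prepend Y_in z_incr
    (range_sub_trans z_tail (range_sub_dropf _ _)) (above_range_sub_dropf Y_in.1 z_tail).
  by rewrite -cut_V -phi_cut.
apply: (stab_len_rejects Y_in lt_n (increasing_dropf Y_in.1 _)
  (range_sub_trans (range_sub_dropf _ _) Y_in.2)).
  move=> x /mem_mkseqP [i lt_in ->]; rewrite /dropf add0n (increasing_ltE Y_in.1).
  exact: ltn_trans lt_in lt_n.
by move=> z z' z_incr z'_incr z_tail z'_tail _ _; rewrite !phi_ext.
Qed.

Lemma exists_stab_len_le_shift Y : inY1 Y ->
  exists2 h, inY1 h /\ range_sub h Y & stab_len h <= stab_len (shift h).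
Proof.
move=> Y_in; apply: NNPP => H.
have desc k : stab_len (dropf k.+1 Y) < stab_len (dropf k Y).
  rewrite -shift_dropf ltnNge; apply/negP => le_k; apply: H; exists (dropf k Y) => //.
  split; last exact: range_sub_dropf.
  exact: (inY1_range_sub Y_in (increasing_dropf Y_in.1 _) (range_sub_dropf _ _)).
have bound k : stab_len (dropf k Y) + k <= stab_len (dropf 0 Y).
  elim: k => [|k IH]; first by rewrite addn0.
  by apply: leq_trans IH; rewrite addnS -addSn leq_add2r.
by have := bound (stab_len (dropf 0 Y)).+1; rewrite addnS ltnNge leq_addl.
Qed.

Lemma stab_len_shift_continuous h : inY1 h -> exists n, forall h', inY1 h' ->
  agree n h h' -> stab_len h' = stab_len h /\ stab_len (shift h') = stab_len (shift h).
Proof.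
move=> h_in; exists (maxn (stab_len h) (stab_len (shift h))).+1 => h' h'_in A.
split; first exact: (stab_len_agree h_in h'_in (agree_le (leqW (leq_maxl _ _)) A)).1.
apply: (stab_len_agree (inY1_shift h_in) (inY1_shift h'_in) _).1 => i lt_i; apply: A.
by rewrite ltnS (leq_trans lt_i) ?leq_maxr.
Qed.

Lemma phi_cut_continuous h : inY1 h -> exists n, forall h', inY1 h' ->
  agree n h h' -> phi h' = phi h /\ phi (cut h') = phi (cut h).
Proof.
move=> h_in; exists (maxn (stab_len h) (stab_len (cut h))).+1 => h' h'_in A.
have [len_eq phi_eq] := stab_len_agree h_in h'_in (agree_le (leqW (leq_maxl _ _)) A).
split => //; have A' := agree_cut h_in h'_in A len_eq.
exact: (stab_len_agree (inY1_cut h_in) (inY1_cut h'_in) (agree_le (leq_maxr _ _) A')).2.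
Qed.

Lemma homogeneous_subset (colour : (nat -> nat) -> bool) Y : inY1 Y ->
  (forall h, inY1 h -> exists n, forall h', inY1 h' -> agree n h h' ->
     colour h' = colour h) ->
  exists Y', [/\ inY1 Y', range_sub Y' Y &
    exists c, forall h, inY1 h -> range_sub h Y' -> colour h = c].
Proof.
move=> Y_in colour_cont.
have in_Y h : increasing h -> range_sub h Y -> inY1 h.
  by move=> h_incr hY; exact: (inY1_range_sub Y_in h_incr hY).
have cont_Y h : increasing h -> range_sub h Y -> exists n, forall h', increasing h' ->
    range_sub h' Y -> agree n h h' -> colour h' = colour h.
  move=> h_incr hY; have [n Hn] := colour_cont h (in_Y h h_incr hY).
  by exists n => h' h'_incr h'Y; apply: Hn; exact: in_Y.
have [Y' [Y'_incr Y'Y [c hom]]] := nash_williams Y_in.1 cont_Y.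
exists Y'; split => //; first exact: in_Y.
by exists c => h [h_incr _] hY'; exact: hom.
Qed.

Lemma homogeneous_cut_subset : exists Y, [/\ inY1 Y,
  forall h, inY1 h -> range_sub h Y -> stab_len h <= stab_len (shift h) &
  forall h, inY1 h -> range_sub h Y -> le (phi h) (phi (cut h)) /\ phi h <> phi (cut h)].
Proof.
have Y1_in : inY1 Y1 by split => //; exact: range_sub_refl.
have len_cont h : inY1 h -> exists n, forall h', inY1 h' -> agree n h h' ->
    (stab_len h' <= stab_len (shift h')) = (stab_len h <= stab_len (shift h)).
  move=> h_in; have [n Hn] := stab_len_shift_continuous h_in.
  by exists n => h' h'_in A; have [-> ->] := Hn h' h'_in A.
have phi_cont (r : P -> P -> bool) h : inY1 h -> exists n, forall h', inY1 h' ->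
    agree n h h' -> r (phi h') (phi (cut h')) = r (phi h) (phi (cut h)).
  move=> h_in; have [n Hn] := phi_cut_continuous h_in.
  by exists n => h' h'_in A; have [-> ->] := Hn h' h'_in A.
have [Y2 [Y2_in _ [[] hom2]]] := homogeneous_subset Y1_in len_cont; last first.
  have [h [h_in hY2] len_le] := exists_stab_len_le_shift Y2_in.
  by rewrite hom2 in len_le.
have [Y3 [Y3_in Y3Y2 [[] hom3]]] :=
  homogeneous_subset Y2_in (phi_cont (fun x y => asbool (le x y))); last first.
  have [h [h_in hY3] phi_le] := exists_phi_le_cut Y3_in.
  by move/asboolP: phi_le; rewrite hom3.
have [Y4 [Y4_in Y4Y3 [[] hom4]]] :=
  homogeneous_subset Y3_in (phi_cont (fun x y => asbool (x = y))).
  have [h [h_in hY4] phi_neq] := exists_phi_neq_cut Y4_in.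
  by case: phi_neq; apply/asboolP; exact: hom4.
exists Y4; split => // h h_in hY4.
  exact: hom2 h h_in (range_sub_trans hY4 (range_sub_trans Y4Y3 Y3Y2)).
split; first exact/asboolP/(hom3 h h_in (range_sub_trans hY4 Y4Y3)).
by move/asboolP; rewrite hom4.
Qed.


Section Chain.
Hypothesis S_bqo : bqo (@dom_le P le).
Variable Y : nat -> nat.
Hypothesis Y_in : inY1 Y.
Hypothesis len_shift : forall h, inY1 h -> range_sub h Y ->
  stab_len h <= stab_len (shift h).
Hypothesis phi_lt_cut : forall h, inY1 h -> range_sub h Y ->
  le (phi h) (phi (cut h)) /\ phi h <> phi (cut h).

Definition phi_chain h n := phi (iter n cut h).

Lemma phi_chain_increasing h : inY1 h -> range_sub h Y -> forall n,
  le (phi_chain h n) (phi_chain h n.+1) /\ phi_chain h n <> phi_chain h n.+1.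
Proof.
move=> h_in hY n; have [hn_in hn_h] := inY1_iter_cut n h_in.
exact: phi_lt_cut hn_in (range_sub_trans hn_h hY).
Qed.

(* Outside its intended domain [phi_chainS] returns a dummy chain. *)
Definition phi_chainS h : Somega le :=
  match excluded_middle_informative (inY1 h /\ range_sub h Y) with
  | left H => exist _ (phi_chain h) (phi_chain_increasing H.1 H.2)
  | right _ => exist _ (phi_chain Y) (phi_chain_increasing Y_in (range_sub_refl Y))
  end.

Lemma phi_chainS_val h : inY1 h -> range_sub h Y -> proj1_sig (phi_chainS h) = phi_chain h.
Proof. by move=> h_in hY; rewrite /phi_chainS; case: excluded_middle_informative => // [[]]. Qed.

Let BY s := B s /\ seq_in s Y.

Definition extend s := prepend s (dropf (last 0 s).+1 Y).

Lemma extend_inY1 s : BY s -> inY1 (extend s) /\ range_sub (extend s) Y.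
Proof.
move=> [Bs sY]; have s_sorted := barrier_sorted B_barrier Bs.
have ext_Y : range_sub (extend s) Y by apply: range_sub_prepend sY (range_sub_dropf _ _).
split => //; split; last exact: range_sub_trans ext_Y Y_in.2.
apply: (increasing_prepend s_sorted _ (increasing_dropf Y_in.1 _)) => x xs.
exact: leq_ltn_trans (leq_last_sorted 0 s_sorted xs) (leq_dropf Y_in.1 _ _).
Qed.

Lemma front_len_extend s : BY s -> front_len B (extend s) = size s.
Proof.
move=> BYs; have [ext_in _] := extend_inY1 BYs.
have [_ B_front] := front_admissible (inY1_admissible ext_in).
by apply: (front_unique B_barrier ext_in.1 B_front); rewrite /extend mkseq_prepend; case: BYs.
Qed.

Lemma phi_extend s : BY s -> phi (extend s) = f s.
Proof. by move=> BYs; rewrite /phi front_len_extend // /extend mkseq_prepend. Qed.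

Lemma cons_iter_cut g j : inY1 g -> range_sub g Y ->
  let g' := prepend [:: g 0] (iter j cut (shift g)) in inY1 g' /\ phi g' = phi g.
Proof.
move=> g_in gY g'; have sg_in := inY1_shift g_in.
have [W_in W_sg] := inY1_iter_cut j sg_in; have [W_agree _] := agree_iter_cut j sg_in.
have g'_g : range_sub g' g.
  apply: range_sub_prepend (range_sub_trans W_sg (range_sub_shift g)).
  by move=> x; rewrite inE => /eqP->; exists 0.
have g'_in : inY1 g'.
  apply: (inY1_range_sub g_in _ g'_g); apply: (increasing_prepend _ _ W_in.1) => // x.
  by rewrite inE => /eqP->; have [m ->] := W_sg 0; rewrite /shift (increasing_ltE g_in.1).
split => //.
have A : agree (stab_len g) g g'.
  case=> [|i] lt_i; first by rewrite /g' prepend_lt.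
  rewrite /g' prepend1S W_agree // -ltnS prednK ?stab_len_gt0 //.
  exact: leq_trans lt_i (len_shift g_in gY).
by have [_ ->] := stab_len_agree g_in g'_in A.
Qed.

Lemma tri_cons_extend s t : BY s -> BY t -> tri s t ->
  exists g, [/\ inY1 g, range_sub g Y, shift g = extend t & phi g = f s].
Proof.
move=> BYs BYt [[|x0 t'] [r_sorted [[k [lt_kr s_eq]] /= t_eq]]] //; subst t'.
have [s_in _] := extend_inY1 BYs; have [t_in t_Y] := extend_inY1 BYt.
have k_gt0 : 0 < k.
  by move: (barrier_nonempty B_barrier BYs.1); rewrite s_eq; case: k {lt_kr s_eq}.
have size_s : size s = k by rewrite s_eq size_takel // ltnW.
have x0_s : x0 \in s.
  by rewrite s_eq; case: k k_gt0 {lt_kr s_eq size_s} => // k _; exact: mem_head.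
have x0_lt : x0 < extend t 0.
  have t_gt0 := barrier_nonempty B_barrier BYt.1.
  rewrite /extend prepend_lt //; move: r_sorted t_gt0.
  by case: (t) => //= y t'' /andP[-> //].
set g := prepend [:: x0] (extend t).
have g_Y : range_sub g Y.
  by apply: range_sub_prepend t_Y => x; rewrite inE => /eqP->; apply: BYs.2.
have g_in : inY1 g.
  split; last exact: range_sub_trans g_Y Y_in.2.
  by apply: (increasing_prepend _ _ t_in.1) => // x; rewrite inE => /eqP->.
exists g; split => //; first exact: shift_prepend1.
rewrite -phi_extend //; apply: phi_agree; try exact: inY1_admissible.
rewrite front_len_extend // size_s => i lt_ik.
rewrite /extend prepend_lt ?size_s // s_eq nth_take //.
case: i lt_ik => [|i] lt_ik; first by rewrite /g prepend_lt.
rewrite /g prepend1S /extend prepend_lt //.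
by rewrite ltnS in lt_kr; exact: leq_trans (ltnW lt_ik) lt_kr.
Qed.

Lemma bad_chain_false : False.
Proof.
have Y_union : in_union B Y := admissible_union (inY1_admissible Y_in).
have [s [t [BYs [BYt [st le_st]]]]] :=
  S_bqo (restrict_barrier B_barrier Y_in.1 Y_union) (fun s => phi_chainS (extend s)).
have [s_in s_Y] := extend_inY1 BYs; have [t_in t_Y] := extend_inY1 BYt.
have [j] := le_st 0; rewrite !phi_chainS_val // /phi_chain /= phi_extend //.
have [g [g_in g_Y g_shift phi_g]] := tri_cons_extend BYs BYt st.
have [g'_in phi_g'] := cons_iter_cut j g_in g_Y.
rewrite -phi_g -g_shift -phi_g' => le_g'.
by apply: (phi_shift_nle (inY1_admissible g'_in)); rewrite shift_prepend1.
Qed.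

End Chain.
End Stabilized.

Lemma bqo_Somega_false : bqo (@dom_le P le) -> False.
Proof.
move=> S_bqo; have [Y1 [Y1_incr Y1_a Y1_dec]] := fusion phi_stable_antitone a_incr.
have [Y [Y_in len_shift phi_lt]] := homogeneous_cut_subset Y1_incr Y1_a Y1_dec.
exact: (bad_chain_false Y1_a S_bqo Y_in len_shift phi_lt).
Qed.

End BadMap.

Theorem theorem1p1 (P : Type) (le : P -> P -> Prop)
  (le_refl : forall x, le x x)
  (le_trans : forall x y z, le x y -> le y z -> le x z)
  (le_anti : forall x y, le x y -> le y x -> x = y) :
  wqo le -> bqo (@dom_le P le) -> bqo le.
Proof.
move=> le_wqo S_bqo B B_barrier f; apply: NNPP => f_good.
have f_bad s t : B s -> B t -> tri s t -> ~ le (f s) (f t).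
  by move=> Bs Bt st le_st; apply: f_good; exists s, t.
have [a [a_incr a_union]] := barrier_union_enum B_barrier.
exact: (bqo_Somega_false le_refl le_wqo B_barrier f_bad a_incr a_union S_bqo).
Qed.
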